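(* Let $Y$ be a real Banach space with a finite-dimensional decomposition $(Q_j)_{j\ge1}$ and let $X$ be a closed subspace of $Y$. Then for every $\delta>0$ there exists an invertible bounded operator $T:Y\to Y$ with $\|T-I\|<\delta$ such that $X$ satisfies the density condition with respect to the FDD $(TQ_jT^{-1})_{j\ge1}$.
   Context: A finite-dimensional decomposition (FDD) of $Y$ is a sequence of finite-rank projections $(Q_j)_{j\ge1}$ with $Q_iQ_j=0$ for $i\ne j$ and $y=\sum_j Q_jy$ for all $y\in Y$. A subspace $X$ of $Y$ satisfies the density condition with respect to the FDD $(Q_j)$ if there is a dense subset $D$ of $X$ such that for every $x\in D$ there is $n=n(x)\in\mathbb N$ with $x=\sum_{j=1}^nQ_jx$. *)

From Stdlib Require Import Reals.
Open Scope R_scope.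

Record BanachSpace := {
  bs_car :> Type;
  bs_zero : bs_car;
  bs_add : bs_car -> bs_car -> bs_car;
  bs_opp : bs_car -> bs_car;
  bs_scal : R -> bs_car -> bs_car;
  bs_norm : bs_car -> R;
  bs_add_assoc : forall x y z, bs_add x (bs_add y z) = bs_add (bs_add x y) z;
  bs_add_comm : forall x y, bs_add x y = bs_add y x;
  bs_add_zero : forall x, bs_add x bs_zero = x;
  bs_add_opp : forall x, bs_add x (bs_opp x) = bs_zero;
  bs_scal_assoc : forall a b x, bs_scal a (bs_scal b x) = bs_scal (a * b) x;
  bs_scal_one : forall x, bs_scal 1 x = x;
  bs_scal_distr_l : forall a x y,
      bs_scal a (bs_add x y) = bs_add (bs_scal a x) (bs_scal a y);
  bs_scal_distr_r : forall a b x,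
      bs_scal (a + b) x = bs_add (bs_scal a x) (bs_scal b x);
  bs_norm_eq0 : forall x, bs_norm x = 0 -> x = bs_zero;
  bs_norm_scal : forall a x, bs_norm (bs_scal a x) = Rabs a * bs_norm x;
  bs_norm_triangle : forall x y, bs_norm (bs_add x y) <= bs_norm x + bs_norm y;
  bs_complete : forall u : nat -> bs_car,
      (forall eps, 0 < eps -> exists N, forall m n, (N <= m)%nat -> (N <= n)%nat ->
          bs_norm (bs_add (u m) (bs_opp (u n))) < eps) ->
      exists l, forall eps, 0 < eps -> exists N, forall n, (N <= n)%nat ->
          bs_norm (bs_add (u n) (bs_opp l)) < eps
}.

Arguments bs_zero {b0}.
Arguments bs_add {b0}.
Arguments bs_opp {b0}.
Arguments bs_scal {b0}.
Arguments bs_norm {b0}.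

Section Ops.
Variable Y : BanachSpace.

Definition dist (x y : Y) : R := bs_norm (bs_add x (bs_opp y)).

Definition converges_to (u : nat -> Y) (l : Y) : Prop :=
  forall eps, 0 < eps -> exists N, forall n, (N <= n)%nat -> dist (u n) l < eps.

Definition is_linear (T : Y -> Y) : Prop :=
  (forall x y, T (bs_add x y) = bs_add (T x) (T y)) /\
  (forall a x, T (bs_scal a x) = bs_scal a (T x)).

Definition is_bounded (T : Y -> Y) : Prop :=
  exists C, forall x, bs_norm (T x) <= C * bs_norm x.

Definition bounded_operator (T : Y -> Y) : Prop := is_linear T /\ is_bounded T.

Definition is_inverse_op (T S : Y -> Y) : Prop :=
  bounded_operator S /\ (forall x, S (T x) = x) /\ (forall x, T (S x) = x).

(* operator norm of T - I is < delta (the supremum of ||Tx - x|| over the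
   unit ball is < delta iff it is bounded by some c < delta) *)
Definition opnorm_T_minus_I_lt (T : Y -> Y) (delta : R) : Prop :=
  exists c, c < delta /\ forall x, bs_norm (bs_add (T x) (bs_opp x)) <= c * bs_norm x.

Fixpoint lincomb (c : nat -> R) (v : nat -> Y) (n : nat) : Y :=
  match n with
  | O => bs_zero
  | S k => bs_add (lincomb c v k) (bs_scal (c k) (v k))
  end.

Definition finite_rank (P : Y -> Y) : Prop :=
  exists n (v : nat -> Y), forall x, exists c : nat -> R, P x = lincomb c v n.

Definition finite_rank_projection (P : Y -> Y) : Prop :=
  bounded_operator P /\ finite_rank P /\ (forall x, P (P x) = P x).

Fixpoint psum (Q : nat -> Y -> Y) (y : Y) (n : nat) : Y :=
  match n with
  | O => bs_zero
  | S k => bs_add (psum Q y k) (Q k y)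
  end.

(* finite-dimensional decomposition (indexed from 0 instead of 1) *)
Definition is_FDD (Q : nat -> Y -> Y) : Prop :=
  (forall j, finite_rank_projection (Q j)) /\
  (forall i j, i <> j -> forall x, Q i (Q j x) = bs_zero) /\
  (forall y, converges_to (psum Q y) y).

Definition closed_subspace (X : Y -> Prop) : Prop :=
  X bs_zero /\
  (forall x y, X x -> X y -> X (bs_add x y)) /\
  (forall a x, X x -> X (bs_scal a x)) /\
  (forall u l, (forall n, X (u n)) -> converges_to u l -> X l).

Definition density_condition (X : Y -> Prop) (Q : nat -> Y -> Y) : Prop :=
  exists D : Y -> Prop,
    (forall x, D x -> X x) /\
    (forall x, X x -> forall eps, 0 < eps -> exists d, D d /\ dist x d < eps) /\
    (forall x, D x -> exists n, x = psum Q x n).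

End Ops.

Arguments dist {Y}.

From Pilot Require Import Defs.
From Stdlib Require Import Reals Lra Lia ClassicalEpsilon Classical ZArith Cantor.
Open Scope R_scope.

(* Let P_N = Q_0 + ... + Q_{N-1}.  These bounded finite-rank operators converge
   pointwise to the identity; hence Y is separable (X has a dense sequence g_k),
   and for every g_k outside span(g_0, ..., g_{k-1}) there is a bounded linear
   functional phi_k killing g_0, ..., g_{k-1} with phi_k(g_k) = 1 (a finite
   Hahn-Banach statement obtained from coordinates in the range of some P_N).
   Recursively put  r_k = g_k - sum_{j<k} phi_j(g_k) u_j  and  u_k = r_k - P_m r_k
   with m so large that ||phi_k|| ||u_k|| <= eps 2^{-k-1}.  Then
   R = sum_k phi_k(.) u_k has norm <= eps, and I - R maps every g_k to a vector
   with finite expansion (P_m r_k for new g_k, a combination of earlier ones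
   otherwise).  With T = (I - R)^{-1} given by the Neumann series, the FDD
   (T Q_j (I - R)) expands every g_k in finitely many terms. *)

Fixpoint Rsum (f : nat -> R) (n : nat) : R :=
  match n with O => 0 | S k => Rsum f k + f k end.

Lemma Rsum_le f g n : (forall i, (i < n)%nat -> f i <= g i) -> Rsum f n <= Rsum g n.
Proof.
  induction n; intro H; simpl. lra.
  assert (f n <= g n) by (apply H; lia).
  assert (Rsum f n <= Rsum g n) by (apply IHn; intros; apply H; lia). lra.
Qed.
Lemma Rsum_nonneg f n : (forall i, (i < n)%nat -> 0 <= f i) -> 0 <= Rsum f n.
Proof.
  induction n; intro H; simpl. lra.
  assert (0 <= f n) by (apply H; lia).
  assert (0 <= Rsum f n) by (apply IHn; intros; apply H; lia). lra.
Qed.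
Lemma Rsum_ge_term f n i : (forall j, (j < n)%nat -> 0 <= f j) -> (i < n)%nat -> f i <= Rsum f n.
Proof.
  induction n; intros H Hi. lia. simpl. destruct (Nat.eq_dec i n) as [->|Hne].
  - assert (0 <= Rsum f n) by (apply Rsum_nonneg; intros; apply H; lia). lra.
  - assert (f i <= Rsum f n) by (apply IHn; [intros; apply H; lia| lia]).
    assert (0 <= f n) by (apply H; lia). lra.
Qed.
Lemma Rsum_nonneg_eq0 f n : (forall j, (j < n)%nat -> 0 <= f j) -> Rsum f n <= 0 ->
  forall i, (i < n)%nat -> f i = 0.
Proof. intros H H0 i Hi. pose proof (Rsum_ge_term f n i H Hi). pose proof (H i Hi). lra. Qed.
Lemma Rsum_scal a f n : Rsum (fun i => a * f i) n = a * Rsum f n.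
Proof. induction n; simpl. ring. rewrite IHn. ring. Qed.

Lemma eventually_forall_lt (P : nat -> nat -> Prop) n :
  (forall i, (i < n)%nat -> exists N, forall k, (N <= k)%nat -> P i k) ->
  exists N, forall i, (i < n)%nat -> forall k, (N <= k)%nat -> P i k.
Proof.
  induction n; intro H. exists O. intros; lia.
  destruct IHn as [N1 H1]. { intros; apply H; lia. }
  destruct (H n ltac:(lia)) as [N2 H2]. exists (N1 + N2)%nat. intros i Hi k Hk.
  destruct (Nat.eq_dec i n) as [->|Hne]. apply H2; lia. apply H1; lia.
Qed.

Lemma inv_succ_small eps : 0 < eps -> exists N, forall k, (N <= k)%nat -> / INR (S k) < eps.
Proof.
  intros Heps. destruct (archimed_cor1 eps Heps) as [N [HN HN0]].
  exists N. intros k Hk. apply Rle_lt_trans with (/ INR N); [|exact HN].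
  apply Rinv_le_contravar. apply lt_0_INR; exact HN0. apply le_INR. lia.
Qed.

Definition grid_point (M p : nat) : R :=
  let (a, b) := Cantor.of_nat p in (INR a - INR b) / INR (S M).

Lemma IZR_as_nat_difference k : IZR k = INR (Z.to_nat k) - INR (Z.to_nat (- k)).
Proof.
  destruct k; simpl.
  - lra.
  - rewrite INR_IZR_INZ, positive_nat_Z. lra.
  - rewrite INR_IZR_INZ, positive_nat_Z, <- Pos2Z.opp_pos, opp_IZR. lra.
Qed.

Lemma grid_point_approx x M : exists p, Rabs (x - grid_point M p) <= / INR (S M).
Proof.
  set (k := up (x * INR (S M))). destruct (archimed (x * INR (S M))) as [H1 H2]. fold k in H1, H2.
  exists (Cantor.to_nat (Z.to_nat k, Z.to_nat (- k))). unfold grid_point. rewrite Cantor.cancel_of_to.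
  rewrite <- IZR_as_nat_difference. assert (HM : 0 < INR (S M)) by (apply lt_0_INR; lia).
  replace (x - IZR k / INR (S M)) with (- (IZR k - x * INR (S M)) / INR (S M)) by (field; lra).
  unfold Rdiv. rewrite Rabs_mult, Rabs_Ropp, Rabs_right by lra.
  rewrite Rabs_right by (apply Rle_ge, Rlt_le, Rinv_0_lt_compat; lra).
  assert (0 < / INR (S M)) by (apply Rinv_0_lt_compat; lra). nra.
Qed.

(* A natural number codes a finite sequence of naturals by iterated pairing. *)
Fixpoint code_tail (i c : nat) : nat := match i with O => c | S k => code_tail k (snd (Cantor.of_nat c)) end.
Definition code_nth (code i : nat) : nat := fst (Cantor.of_nat (code_tail i code)).

Lemma code_exists (t : nat -> nat) r : exists code, forall i, (i < r)%nat -> code_nth code i = t i.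
Proof.
  revert t. induction r; intro t. exists O. intros; lia.
  destruct (IHr (fun i => t (S i))) as [c Hc]. exists (Cantor.to_nat (t O, c)).
  intros [|i] Hi; unfold code_nth; cbn [code_tail]; rewrite Cantor.cancel_of_to.
  - reflexivity.
  - apply Hc. lia.
Qed.

Section Banach.
Variable Y : BanachSpace.
Local Notation "x +v y" := (@bs_add Y x y) (at level 50, left associativity).
Local Notation "-v x" := (@bs_opp Y x) (at level 35, right associativity).
Local Notation "a *v x" := (@bs_scal Y a x) (at level 40).
Local Notation "'nrm' x" := (@bs_norm Y x) (at level 10, x at level 9).
Local Notation "0v" := (@bs_zero Y).

Lemma add0l (x : Y) : 0v +v x = x.
Proof. rewrite bs_add_comm. apply bs_add_zero. Qed.
Lemma addNl (x : Y) : -v x +v x = 0v.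
Proof. rewrite bs_add_comm. apply bs_add_opp. Qed.
Lemma addA (x y z : Y) : x +v (y +v z) = x +v y +v z.
Proof. apply bs_add_assoc. Qed.
Lemma addC (x y : Y) : x +v y = y +v x.
Proof. apply bs_add_comm. Qed.
Lemma addACA (a b c d : Y) : (a +v b) +v (c +v d) = (a +v c) +v (b +v d).
Proof. rewrite <- !addA. f_equal. rewrite !addA. f_equal. apply addC. Qed.
Lemma addI (x y z : Y) : x +v y = x +v z -> y = z.
Proof.
  intro H. rewrite <- (add0l y), <- (add0l z), <- (addNl x), <- !addA, H. reflexivity.
Qed.
Lemma add_eq0 (x y : Y) : x +v y = 0v -> x = -v y.
Proof.
  intro H. rewrite <- (bs_add_zero _ x), <- (bs_add_opp _ y), addA, H, add0l. reflexivity.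
Qed.
Lemma subrr (x : Y) : x +v -v x = 0v.
Proof. apply bs_add_opp. Qed.
Lemma scal0l (x : Y) : 0 *v x = 0v.
Proof.
  apply (addI (0 *v x)). rewrite bs_add_zero, <- bs_scal_distr_r. f_equal. ring.
Qed.
Lemma scal0r (a : R) : a *v 0v = 0v.
Proof.
  apply (addI (a *v 0v)). rewrite bs_add_zero, <- bs_scal_distr_l, bs_add_zero. reflexivity.
Qed.
Lemma opp_scal (x : Y) : -v x = (-1) *v x.
Proof.
  apply (addI x). rewrite subrr. rewrite <- (bs_scal_one _ x) at 1.
  rewrite <- bs_scal_distr_r. replace (1 + -1) with 0 by ring. rewrite scal0l. reflexivity.
Qed.
Lemma scal_opp (a : R) (x : Y) : a *v (-v x) = -v (a *v x).
Proof. rewrite !opp_scal, !bs_scal_assoc. f_equal. ring. Qed.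
Lemma opp_add (x y : Y) : -v (x +v y) = -v x +v -v y.
Proof. rewrite !opp_scal, bs_scal_distr_l. reflexivity. Qed.
Lemma oppK (x : Y) : -v -v x = x.
Proof. rewrite !opp_scal, bs_scal_assoc. replace (-1 * -1) with 1 by ring. apply bs_scal_one. Qed.
Lemma opp0 : -v 0v = 0v.
Proof. rewrite opp_scal. apply scal0r. Qed.
Lemma sub_telescope (x y z : Y) : x +v -v z = (x +v -v y) +v (y +v -v z).
Proof. rewrite <- addA, (addA (-v y)), addNl, add0l. reflexivity. Qed.
Lemma sub_add2 (a b c d : Y) : (a +v b) +v -v (c +v d) = (a +v -v c) +v (b +v -v d).
Proof. rewrite opp_add. apply addACA. Qed.
Lemma scal_sub (a : R) (x y : Y) : a *v x +v -v (a *v y) = a *v (x +v -v y).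
Proof. rewrite bs_scal_distr_l, scal_opp. reflexivity. Qed.
Lemma addKsub (a b c : Y) : a +v ((b +v -v a) +v -v c) = b +v -v c.
Proof. rewrite !addA. f_equal. rewrite (addC a b), <- addA, subrr, bs_add_zero. reflexivity. Qed.
Lemma subKsub (a b : Y) : a +v -v (a +v -v b) = b.
Proof. rewrite opp_add, oppK, addA, subrr, add0l. reflexivity. Qed.

Lemma norm0 : nrm 0v = 0.
Proof. rewrite <- (scal0l 0v), bs_norm_scal, Rabs_R0. ring. Qed.
Lemma norm_opp (x : Y) : nrm (-v x) = nrm x.
Proof. rewrite opp_scal, bs_norm_scal, Rabs_left by lra. ring. Qed.
Lemma norm_ge0 (x : Y) : 0 <= nrm x.
Proof.
  pose proof (bs_norm_triangle _ x (-v x)) as H. rewrite subrr, norm0, norm_opp in H. lra.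
Qed.
Lemma norm_sub0 (x y : Y) : nrm (x +v -v y) = 0 -> x = y.
Proof.
  intro H. apply bs_norm_eq0 in H.
  rewrite <- (bs_add_zero _ x), <- (addNl y), addA, H, add0l. reflexivity.
Qed.
Lemma norm_subC (x y : Y) : nrm (x +v -v y) = nrm (y +v -v x).
Proof. rewrite <- norm_opp, opp_add, oppK, addC. reflexivity. Qed.
Lemma norm_sub_triangle (x y z : Y) : nrm (x +v -v z) <= nrm (x +v -v y) + nrm (y +v -v z).
Proof. rewrite (sub_telescope x y z). apply bs_norm_triangle. Qed.
Lemma norm_le_sub (x y : Y) : nrm x <= nrm (x +v -v y) + nrm y.
Proof. pose proof (norm_sub_triangle x y 0v) as H. rewrite opp0, !bs_add_zero in H. exact H. Qed.

Definition conv (u : nat -> Y) (l : Y) := converges_to Y u l.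

Lemma conv_unique u l1 l2 : conv u l1 -> conv u l2 -> l1 = l2.
Proof.
  intros H1 H2. apply norm_sub0. apply Rle_antisym; [|apply norm_ge0].
  apply le_epsilon. intros eps Heps.
  destruct (H1 (eps/2)) as [N1 HN1]; [lra|]. destruct (H2 (eps/2)) as [N2 HN2]; [lra|].
  specialize (HN1 (max N1 N2) (Nat.le_max_l _ _)). specialize (HN2 (max N1 N2) (Nat.le_max_r _ _)).
  unfold Defs.dist in *. pose proof (norm_sub_triangle l1 (u (max N1 N2)) l2).
  rewrite norm_subC in HN1. lra.
Qed.

Lemma conv_eventually_ext u v l : (exists N, forall n, (N <= n)%nat -> u n = v n) -> conv u l -> conv v l.
Proof.
  intros [N HN] H eps Heps. destruct (H eps Heps) as [M HM]. exists (max N M).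
  intros n Hn. rewrite <- HN by lia. apply HM. lia.
Qed.

Lemma conv_ext u v l : (forall n, u n = v n) -> conv u l -> conv v l.
Proof. intros H. apply conv_eventually_ext. exists O. intros; apply H. Qed.

Lemma conv_const l : conv (fun _ => l) l.
Proof. intros eps Heps. exists O. intros n _. unfold Defs.dist. rewrite subrr, norm0. lra. Qed.

Lemma conv_shift u l : conv u l -> conv (fun n => u (S n)) l.
Proof. intros H eps Heps. destruct (H eps Heps) as [N HN]. exists N. intros n Hn. apply HN. lia. Qed.

Lemma conv_add u v a b : conv u a -> conv v b -> conv (fun n => u n +v v n) (a +v b).
Proof.
  intros Hu Hv eps Heps. destruct (Hu (eps/2)) as [N1 H1]; [lra|]. destruct (Hv (eps/2)) as [N2 H2]; [lra|].
  exists (max N1 N2). intros n Hn. unfold Defs.dist in *. rewrite sub_add2.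
  pose proof (bs_norm_triangle _ (u n +v -v a) (v n +v -v b)).
  specialize (H1 n ltac:(lia)). specialize (H2 n ltac:(lia)). lra.
Qed.

Lemma conv_scal c u a : conv u a -> conv (fun n => c *v u n) (c *v a).
Proof.
  intros Hu eps Heps. pose proof (Rabs_pos c).
  destruct (Hu (eps/(Rabs c + 1))) as [N HN]. { apply Rdiv_lt_0_compat; lra. }
  exists N. intros n Hn. unfold Defs.dist in *. rewrite scal_sub, bs_norm_scal.
  specialize (HN n Hn). pose proof (norm_ge0 (u n +v -v a)).
  apply Rle_lt_trans with (Rabs c * (eps / (Rabs c + 1))).
  - apply Rmult_le_compat_l; lra.
  - apply Rlt_le_trans with ((Rabs c + 1) * (eps / (Rabs c + 1))).
    + apply Rmult_lt_compat_r; [apply Rdiv_lt_0_compat|]; lra.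
    + right. field. lra.
Qed.

Lemma lin_opp (A : Y -> Y) x : is_linear Y A -> A (-v x) = -v (A x).
Proof. intros [_ Hs]. rewrite opp_scal, Hs, <- opp_scal. reflexivity. Qed.
Lemma lin_zero (A : Y -> Y) : is_linear Y A -> A 0v = 0v.
Proof. intros [_ Hs]. rewrite <- (scal0l 0v) at 1. rewrite Hs, scal0l. reflexivity. Qed.
Lemma lin_sub (A : Y -> Y) x y : is_linear Y A -> A (x +v -v y) = A x +v -v (A y).
Proof. intros H. rewrite (proj1 H), lin_opp by exact H. reflexivity. Qed.

Lemma bounded_pos (A : Y -> Y) : is_bounded Y A -> exists C, 0 < C /\ forall x, nrm (A x) <= C * nrm x.
Proof.
  intros [C HC]. exists (Rabs C + 1). split. { pose proof (Rabs_pos C). lra. }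
  intro x. eapply Rle_trans; [apply HC|]. apply Rmult_le_compat_r; [apply norm_ge0|].
  pose proof (Rle_abs C). lra.
Qed.

Lemma conv_op (A : Y -> Y) u a : bounded_operator Y A -> conv u a -> conv (fun n => A (u n)) (A a).
Proof.
  intros [Hl Hb] Hu eps Heps. destruct (bounded_pos A Hb) as [C [HC HA]].
  destruct (Hu (eps / C)) as [N HN]. { apply Rdiv_lt_0_compat; lra. }
  exists N. intros n Hn. unfold Defs.dist in *. rewrite <- lin_sub by exact Hl.
  eapply Rle_lt_trans; [apply HA|]. specialize (HN n Hn).
  apply Rlt_le_trans with (C * (eps / C)). { apply Rmult_lt_compat_l; lra. }
  right. field. lra.
Qed.

Lemma bounded_add (A B : Y -> Y) : bounded_operator Y A -> bounded_operator Y B ->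
  bounded_operator Y (fun y => A y +v B y).
Proof.
  intros [[HA1 HA2] HAb] [[HB1 HB2] HBb]. split; [split|].
  - intros x y. rewrite HA1, HB1. apply addACA.
  - intros a x. rewrite HA2, HB2, bs_scal_distr_l. reflexivity.
  - destruct (bounded_pos A HAb) as [C1 [_ H1]]. destruct (bounded_pos B HBb) as [C2 [_ H2]].
    exists (C1 + C2). intro x. eapply Rle_trans; [apply bs_norm_triangle|].
    specialize (H1 x). specialize (H2 x). lra.
Qed.

Lemma bounded_comp (A B : Y -> Y) : bounded_operator Y A -> bounded_operator Y B ->
  bounded_operator Y (fun y => A (B y)).
Proof.
  intros [[HA1 HA2] HAb] [[HB1 HB2] HBb]. split; [split|].
  - intros x y. rewrite HB1, HA1. reflexivity.
  - intros a x. rewrite HB2, HA2. reflexivity.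
  - destruct (bounded_pos A HAb) as [C1 [HC1 H1]]. destruct (bounded_pos B HBb) as [C2 [_ H2]].
    exists (C1 * C2). intro x. eapply Rle_trans; [apply H1|]. rewrite Rmult_assoc.
    apply Rmult_le_compat_l; [lra|]. apply H2.
Qed.

Lemma bounded_zero : bounded_operator Y (fun _ => 0v).
Proof.
  split; [split|].
  - intros; rewrite bs_add_zero; reflexivity.
  - intros; rewrite scal0r; reflexivity.
  - exists 0. intro. rewrite norm0. lra.
Qed.


Lemma bounded_id_minus (A : Y -> Y) : bounded_operator Y A -> bounded_operator Y (fun x => x +v -v A x).
Proof.
  intros [[HA1 HA2] HAb]. split; [split|].
  - intros x y. rewrite HA1, opp_add. apply addACA.
  - intros a x. rewrite HA2. apply scal_sub.
  - destruct (bounded_pos A HAb) as [C [_ HC]]. exists (1 + C). intro x.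
    eapply Rle_trans; [apply bs_norm_triangle|]. rewrite norm_opp. specialize (HC x). lra.
Qed.

Fixpoint ssum (a : nat -> Y) (n : nat) : Y :=
  match n with O => 0v | S k => ssum a k +v a k end.

Lemma ssum_lin (A : Y -> Y) a n : is_linear Y A -> A (ssum a n) = ssum (fun k => A (a k)) n.
Proof.
  intro H. induction n; simpl. apply lin_zero; exact H. rewrite (proj1 H), IHn. reflexivity.
Qed.
Lemma ssum_add a b n : ssum (fun k => a k +v b k) n = ssum a n +v ssum b n.
Proof. induction n; simpl. rewrite bs_add_zero. reflexivity. rewrite IHn. apply addACA. Qed.
Lemma ssum_scal c a n : ssum (fun k => c *v a k) n = c *v ssum a n.
Proof. induction n; simpl. rewrite scal0r. reflexivity. rewrite IHn, bs_scal_distr_l. reflexivity. Qed.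
Lemma ssum_ext a b n : (forall k, (k < n)%nat -> a k = b k) -> ssum a n = ssum b n.
Proof.
  induction n; intro H; simpl. reflexivity.
  rewrite IHn by (intros; apply H; lia). rewrite H by lia. reflexivity.
Qed.
Lemma ssum_zero_tail a n m : (forall k, (n <= k)%nat -> a k = 0v) -> (n <= m)%nat -> ssum a m = ssum a n.
Proof.
  intros H Hm. induction Hm. reflexivity. simpl. rewrite IHHm, H by lia. apply bs_add_zero.
Qed.

Lemma ssum_geometric_tail a K q n d : 0 <= q < 1 -> (forall k, nrm (a k) <= K * q^k) ->
  nrm (ssum a (n + d)%nat +v -v ssum a n) <= K * q^n * (1 - q^d) / (1 - q).
Proof.
  intros Hq Ha. induction d.
  - rewrite Nat.add_0_r, subrr, norm0. simpl. right. field. lra.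
  - replace (n + S d)%nat with (S (n + d)) by lia. simpl.
    rewrite <- addA, (addC (a (n + d)%nat)), addA.
    eapply Rle_trans; [apply bs_norm_triangle|].
    eapply Rle_trans. { apply Rplus_le_compat; [apply IHd | apply Ha]. }
    right. rewrite pow_add. simpl. field. lra.
Qed.

Lemma geometric_series_converges a K q : 0 <= q < 1 -> (forall k, nrm (a k) <= K * q^k) ->
  exists l, conv (ssum a) l /\ forall n, nrm (l +v -v ssum a n) <= K * q^n / (1 - q).
Proof.
  intros Hq Ha.
  assert (HK : 0 <= K). { pose proof (Ha O). pose proof (norm_ge0 (a O)). simpl in *. lra. }
  assert (Hqn : forall n, 0 <= q ^ n) by (intro; apply pow_le; lra).
  assert (Hb : forall n d, nrm (ssum a (n + d)%nat +v -v ssum a n) <= K * q^n / (1 - q)).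
  { intros n d. eapply Rle_trans; [apply (ssum_geometric_tail a K q n d Hq Ha)|].
    unfold Rdiv. apply Rmult_le_compat_r. { apply Rlt_le, Rinv_0_lt_compat. lra. }
    pose proof (Hqn n). pose proof (Hqn d). assert (0 <= K * q^n) by nra. nra. }
  assert (Hsmall : forall eps, 0 < eps -> exists N, forall n, (N <= n)%nat -> K * q^n / (1 - q) < eps).
  { intros eps Heps.
    destruct (pow_lt_1_zero q ltac:(rewrite Rabs_right; lra) (eps * (1 - q) / (K + 1))) as [N HN].
    { apply Rdiv_lt_0_compat; [apply Rmult_lt_0_compat|]; lra. }
    exists N. intros n Hn. specialize (HN n Hn). rewrite Rabs_right in HN by (apply Rle_ge; apply Hqn).
    assert (H1 : (K+1) * q^n < eps*(1-q)).
    { apply Rmult_lt_compat_l with (r:=K+1) in HN; [|lra].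
      replace ((K+1)*(eps*(1-q)/(K+1))) with (eps*(1-q)) in HN by (field; lra). exact HN. }
    apply Rmult_lt_reg_r with (1-q); [lra|].
    replace (K*q^n/(1-q)*(1-q)) with (K*q^n) by (field; lra). pose proof (Hqn n). nra. }
  destruct (bs_complete _ (ssum a)) as [l Hl].
  { intros eps Heps. destruct (Hsmall eps Heps) as [N HN]. exists N. intros m n Hm Hn.
    destruct (Nat.le_ge_cases n m) as [Hnm|Hnm].
    - replace m with (n + (m - n))%nat by lia. eapply Rle_lt_trans; [apply Hb|]. apply HN; lia.
    - rewrite norm_subC. replace n with (m + (n - m))%nat by lia.
      eapply Rle_lt_trans; [apply Hb|]. apply HN; lia. }
  exists l. split. exact Hl.
  intro n. apply le_epsilon. intros eps Heps. destruct (Hl eps Heps) as [N HN].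
  specialize (HN (n + N)%nat ltac:(lia)). unfold Defs.dist in HN.
  pose proof (norm_sub_triangle l (ssum a (n + N)) (ssum a n)). rewrite norm_subC in HN.
  specialize (Hb n N). lra.
Qed.

(* The sum of a series, chosen by classical description (any value if divergent). *)
Definition series_sum (a : nat -> Y) : Y := epsilon (inhabits 0v) (fun l => conv (ssum a) l).
Lemma series_sum_spec a l : conv (ssum a) l -> series_sum a = l.
Proof.
  intro H. apply (conv_unique (ssum a)); [|exact H]. unfold series_sum.
  apply (epsilon_spec (inhabits 0v) (fun l => conv (ssum a) l)). exists l. exact H.
Qed.

Lemma operator_series (a : nat -> Y -> Y) K q : (forall k, is_linear Y (a k)) -> 0 <= q < 1 ->
  (forall k x, nrm (a k x) <= K * nrm x * q ^ k) ->
  exists A, bounded_operator Y A /\ (forall x, conv (ssum (fun k => a k x)) (A x)) /\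
    (forall x n, nrm (A x +v -v ssum (fun k => a k x) n) <= K * nrm x * q ^ n / (1 - q)).
Proof.
  intros Hlin Hq Hb.
  assert (Hg : forall x, exists l, conv (ssum (fun k => a k x)) l /\
     forall n, nrm (l +v -v ssum (fun k => a k x) n) <= K * nrm x * q ^ n / (1 - q)).
  { intro x. apply geometric_series_converges; [exact Hq|]. intro k. apply Hb. }
  assert (Hs : forall x, conv (ssum (fun k => a k x)) (series_sum (fun k => a k x))).
  { intro x. destruct (Hg x) as [l [Hl _]]. rewrite (series_sum_spec _ l Hl). exact Hl. }
  exists (fun x => series_sum (fun k => a k x)). split; [split; [split|]|split].
  - intros x y. apply series_sum_spec.
    eapply conv_ext; [|apply (conv_add _ _ _ _ (Hs x) (Hs y))].
    intro n. simpl. rewrite <- ssum_add. apply ssum_ext. intros k _. symmetry. apply (proj1 (Hlin k)).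
  - intros c x. apply series_sum_spec.
    eapply conv_ext; [|apply (conv_scal c _ _ (Hs x))].
    intro n. simpl. rewrite <- ssum_scal. apply ssum_ext. intros k _. symmetry. apply (proj2 (Hlin k)).
  - exists (K / (1 - q)). intro x. destruct (Hg x) as [l [Hl Hb2]].
    rewrite (series_sum_spec _ l Hl). specialize (Hb2 O). simpl in Hb2. rewrite opp0, bs_add_zero in Hb2.
    eapply Rle_trans; [exact Hb2|]. right. field. lra.
  - exact Hs.
  - intros x n. destruct (Hg x) as [l [Hl Hb2]]. rewrite (series_sum_spec _ l Hl). apply Hb2.
Qed.

Fixpoint iter_op (A : Y -> Y) (n : nat) (x : Y) : Y :=
  match n with O => x | S k => A (iter_op A k x) end.

Section Neumann.
Variable A : Y -> Y.
Variable e : R.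
Hypothesis HA : bounded_operator Y A.
Hypothesis He : 0 <= e < 1.
Hypothesis HAe : forall x, nrm (A x) <= e * nrm x.

Lemma iter_op_linear k : is_linear Y (iter_op A k).
Proof.
  destruct HA as [[HA1 HA2] _]. induction k; split; simpl; try reflexivity.
  - intros x y. rewrite (proj1 IHk). apply HA1.
  - intros c x. rewrite (proj2 IHk). apply HA2.
Qed.

Lemma iter_op_bound k x : nrm (iter_op A k x) <= 1 * nrm x * e ^ k.
Proof.
  induction k; simpl. lra. eapply Rle_trans; [apply HAe|]. assert (0 <= e) by lra. nra.
Qed.

Lemma iter_op_conv0 x : conv (fun n => iter_op A n x) 0v.
Proof.
  intros eps Heps. pose proof (norm_ge0 x).
  destruct (pow_lt_1_zero e ltac:(rewrite Rabs_right; lra) (eps / (nrm x + 1))) as [N HN].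
  { apply Rdiv_lt_0_compat; lra. }
  exists N. intros n Hn. unfold Defs.dist. rewrite opp0, bs_add_zero.
  eapply Rle_lt_trans; [apply iter_op_bound|]. specialize (HN n Hn).
  rewrite Rabs_right in HN by (apply Rle_ge, pow_le; lra).
  apply Rle_lt_trans with ((nrm x + 1) * e ^ n). { assert (0 <= e^n) by (apply pow_le; lra). nra. }
  apply Rmult_lt_compat_l with (r := nrm x + 1) in HN; [|lra].
  replace ((nrm x + 1) * (eps / (nrm x + 1))) with eps in HN by (field; lra). exact HN.
Qed.

Lemma neumann_series : exists T, bounded_operator Y T /\
    (forall x, T (x +v -v A x) = x) /\ (forall x, T x +v -v A (T x) = x) /\
    (forall x, nrm (T x +v -v x) <= e / (1 - e) * nrm x).
Proof.
  destruct (operator_series (iter_op A) 1 e iter_op_linear He iter_op_bound)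
    as [T [HT [Hconv Htail]]].
  exists T. split; [exact HT|]. split; [|split].
  - intro x.
    assert (E : forall n, ssum (fun k => iter_op A k (x +v -v A x)) n = x +v -v iter_op A n x).
    { induction n; simpl. symmetry. apply subrr.
      rewrite IHn, (lin_sub (iter_op A n)) by apply iter_op_linear.
      replace (iter_op A n (A x)) with (A (iter_op A n x)) by (clear; induction n; simpl; congruence).
      rewrite <- sub_telescope. reflexivity. }
    apply (conv_unique (ssum (fun k => iter_op A k (x +v -v A x)))); [apply Hconv|].
    eapply conv_ext; [intro n; symmetry; apply E|].
    pose proof (conv_add _ _ _ _ (conv_const x) (conv_scal (-1) _ _ (iter_op_conv0 x))) as H1.
    rewrite scal0r, bs_add_zero in H1. eapply conv_ext; [|exact H1].
    intro n. simpl. rewrite <- opp_scal. reflexivity.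
  - intro x.
    assert (E : forall n, A (ssum (fun k => iter_op A k x) n) = ssum (fun k => iter_op A k x) (S n) +v -v x).
    { intro n. rewrite (ssum_lin A) by apply HA. induction n; simpl.
      - rewrite add0l, subrr. reflexivity.
      - rewrite IHn. simpl. rewrite <- !addA. f_equal. f_equal. apply addC. }
    assert (H1 : conv (fun n => A (ssum (fun k => iter_op A k x) n)) (A (T x))).
    { apply conv_op; [exact HA | apply Hconv]. }
    assert (H2 : conv (fun n => A (ssum (fun k => iter_op A k x) n)) (T x +v -v x)).
    { eapply conv_ext; [intro n; symmetry; apply E|].
      apply (conv_add _ _ _ _ (conv_shift _ _ (Hconv x)) (conv_const (-v x))). }
    rewrite (conv_unique _ _ _ H1 H2), opp_add, oppK, addA, subrr, add0l. reflexivity.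
  - intro x. specialize (Htail x 1%nat). simpl in Htail. rewrite add0l in Htail.
    eapply Rle_trans; [exact Htail|]. right. field. lra.
Qed.
End Neumann.

Local Notation lc := (lincomb Y).

Definition span (v : nat -> Y) n y := exists c, y = lc c v n.
Definition indep (v : nat -> Y) n := forall c, lc c v n = 0v -> forall i, (i < n)%nat -> c i = 0.
Definition set_nth (v : nat -> Y) s (h : Y) := fun i => if Nat.eqb i s then h else v i.

Lemma lc_ext c d v w n : (forall i, (i < n)%nat -> c i = d i /\ v i = w i) -> lc c v n = lc d w n.
Proof.
  induction n; intro H; simpl. reflexivity.
  rewrite IHn by (intros; apply H; lia). destruct (H n ltac:(lia)) as [-> ->]. reflexivity.
Qed.
Lemma lc_add c d v n : lc (fun i => c i + d i) v n = lc c v n +v lc d v n.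
Proof.
  induction n; simpl. rewrite bs_add_zero. reflexivity.
  rewrite IHn, bs_scal_distr_r. apply addACA.
Qed.
Lemma lc_scal a c v n : lc (fun i => a * c i) v n = a *v lc c v n.
Proof. induction n; simpl. rewrite scal0r. reflexivity. rewrite IHn, bs_scal_distr_l, bs_scal_assoc. reflexivity. Qed.
Lemma lc_sub c d v n : lc (fun i => c i - d i) v n = lc c v n +v -v lc d v n.
Proof.
  unfold Rminus. rewrite lc_add. f_equal. rewrite opp_scal, <- lc_scal.
  apply lc_ext. intros; split; [ring|reflexivity].
Qed.
Lemma lc_sub_vectors c v w n : lc c (fun i => v i +v -v w i) n = lc c v n +v -v lc c w n.
Proof.
  induction n; simpl. rewrite opp0, bs_add_zero. reflexivity.
  rewrite IHn, bs_scal_distr_l, scal_opp, sub_add2. reflexivity.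
Qed.
Lemma lc_lin (A : Y -> Y) c v n : is_linear Y A -> A (lc c v n) = lc c (fun i => A (v i)) n.
Proof.
  intro H. induction n; simpl. apply lin_zero; exact H. rewrite (proj1 H), (proj2 H), IHn. reflexivity.
Qed.
Lemma lc_zero v n : lc (fun _ => 0) v n = 0v.
Proof. induction n; simpl. reflexivity. rewrite IHn, scal0l, bs_add_zero. reflexivity. Qed.
Lemma lc_delta v n i : (i < n)%nat -> lc (fun j => if Nat.eqb j i then 1 else 0) v n = v i.
Proof.
  induction n; intro Hi. lia. simpl. destruct (Nat.eq_dec i n) as [->|Hne].
  - rewrite Nat.eqb_refl, bs_scal_one, (lc_ext _ (fun _ => 0) v v), lc_zero, add0l. reflexivity.
    intros j Hj. split; [|reflexivity]. destruct (Nat.eqb_spec j n); [lia|reflexivity].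
  - rewrite IHn by lia. destruct (Nat.eqb_spec n i); [lia|]. rewrite scal0l, bs_add_zero. reflexivity.
Qed.
Lemma lc_as_ssum c v n : ssum (fun j => c j *v v j) n = lc c v n.
Proof. induction n; simpl. reflexivity. rewrite IHn. reflexivity. Qed.
Lemma norm_lc c v n : nrm (lc c v n) <= Rsum (fun i => Rabs (c i) * nrm (v i)) n.
Proof.
  induction n; simpl. rewrite norm0. lra.
  eapply Rle_trans; [apply bs_norm_triangle|]. rewrite bs_norm_scal. lra.
Qed.

Lemma indep_unique v n c d : indep v n -> lc c v n = lc d v n -> forall i, (i < n)%nat -> c i = d i.
Proof.
  intros H E i Hi. assert (c i - d i = 0); [|lra].
  apply (H (fun j => c j - d j)); [|exact Hi]. rewrite lc_sub, E. apply subrr.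
Qed.

Lemma span_zero v n : span v n 0v.
Proof. exists (fun _ => 0). rewrite lc_zero. reflexivity. Qed.
Lemma span_add v n x y : span v n x -> span v n y -> span v n (x +v y).
Proof. intros [c ->] [d ->]. exists (fun i => c i + d i). rewrite lc_add. reflexivity. Qed.
Lemma span_scal v n a x : span v n x -> span v n (a *v x).
Proof. intros [c ->]. exists (fun i => a * c i). rewrite lc_scal. reflexivity. Qed.
Lemma span_lc v n w k c : (forall i, (i < k)%nat -> span v n (w i)) -> span v n (lc c w k).
Proof.
  induction k; intro H; simpl. apply span_zero.
  apply span_add. apply IHk; intros; apply H; lia. apply span_scal, H; lia.
Qed.
Lemma span_base v n i : (i < n)%nat -> span v n (v i).
Proof. intro Hi. exists (fun j => if Nat.eqb j i then 1 else 0). rewrite lc_delta by exact Hi. reflexivity. Qed.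
Lemma span_set_nth B s h y : span B s y -> span (set_nth B s h) (S s) y.
Proof.
  intros [c ->]. exists (fun i => if Nat.eqb i s then 0 else c i). simpl.
  rewrite Nat.eqb_refl, scal0l, bs_add_zero. apply lc_ext. intros i Hi.
  unfold set_nth. destruct (Nat.eqb_spec i s); [lia|]. split; reflexivity.
Qed.

Lemma indep_prefix v n : indep v (S n) -> indep v n.
Proof.
  intros H c Hc i Hi. pose (c' := fun j => if Nat.eqb j n then 0 else c j).
  assert (E : lc c' v (S n) = 0v).
  { simpl. unfold c' at 2. rewrite Nat.eqb_refl, scal0l, bs_add_zero, <- Hc. apply lc_ext.
    intros j Hj. unfold c'. destruct (Nat.eqb_spec j n); [lia|]. split; reflexivity. }
  specialize (H c' E i ltac:(lia)). unfold c' in H. destruct (Nat.eqb_spec i n); [lia|]. exact H.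
Qed.

Lemma indep_snoc v s h : indep v s -> ~ span v s h -> indep (set_nth v s h) (S s).
Proof.
  intros Hv Hh c Hc. simpl in Hc. unfold set_nth at 2 in Hc. rewrite Nat.eqb_refl in Hc.
  rewrite (lc_ext c c (set_nth v s h) v) in Hc.
  2: { intros i Hi. unfold set_nth. destruct (Nat.eqb_spec i s); [lia|]. split; reflexivity. }
  assert (Hcs : c s = 0).
  { destruct (Req_dec (c s) 0) as [|Hne]; [assumption|]. exfalso. apply Hh.
    exists (fun i => (- / c s) * c i). rewrite lc_scal, (add_eq0 _ _ Hc), opp_scal, !bs_scal_assoc.
    replace (- / c s * -1 * c s) with 1 by (field; exact Hne). rewrite bs_scal_one. reflexivity. }
  intros i Hi. destruct (Nat.eq_dec i s) as [->|Hne]. exact Hcs.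
  apply (Hv c); [|lia]. rewrite Hcs, scal0l, bs_add_zero in Hc. exact Hc.
Qed.

Lemma extend_independent u n w r : indep u n -> exists B s, (n <= s)%nat /\
  (forall i, (i < n)%nat -> B i = u i) /\ indep B s /\ (forall j, (j < r)%nat -> span B s (w j)) /\
  (forall i, (i < s)%nat -> (n <= i)%nat -> exists j, (j < r)%nat /\ B i = w j).
Proof.
  intro Hu. induction r as [|r IH].
  { exists u, n. repeat split; auto; intros; lia. }
  destruct IH as [B [s [H1 [H2 [H3 [H4 H5]]]]]].
  destruct (classic (span B s (w r))) as [Hs|Hs].
  - exists B, s. repeat split; auto.
    + intros j Hj. destruct (Nat.eq_dec j r) as [->|]; [exact Hs|apply H4; lia].
    + intros i Hi Hni. destruct (H5 i Hi Hni) as [j [Hj E]]. exists j. split; [lia|exact E].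
  - exists (set_nth B s (w r)), (S s). repeat split.
    + lia.
    + intros i Hi. unfold set_nth. destruct (Nat.eqb_spec i s); [lia|]. apply H2, Hi.
    + apply indep_snoc; assumption.
    + intros j Hj. destruct (Nat.eq_dec j r) as [->|].
      * assert (E : set_nth B s (w r) s = w r) by (unfold set_nth; rewrite Nat.eqb_refl; reflexivity).
        rewrite <- E at 2. apply span_base. lia.
      * apply span_set_nth, H4. lia.
    + intros i Hi Hni. unfold set_nth. destruct (Nat.eqb_spec i s).
      * exists r. split; [lia|reflexivity].
      * destruct (H5 i ltac:(lia) Hni) as [j [Hj E]]. exists j. split; [lia|exact E].
Qed.

Lemma indep_last_not_in_span v n : indep v (S n) -> ~ span v n (v n).
Proof.
  intros Hind [a Ha]. pose (c := fun i => if Nat.eqb i n then -1 else a i).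
  assert (Hc : lc c v (S n) = 0v).
  { simpl. unfold c at 2. rewrite Nat.eqb_refl, <- opp_scal, (lc_ext c a v v), <- Ha.
    - apply subrr.
    - intros i Hi. unfold c. destruct (Nat.eqb_spec i n); [lia|]. split; reflexivity. }
  specialize (Hind c Hc n ltac:(lia)). unfold c in Hind. rewrite Nat.eqb_refl in Hind. lra.
Qed.

Section LowerBound.
Variables (v : nat -> Y) (n : nat) (m0 : R).
Hypothesis Hm0 : 0 < m0.
Hypothesis Hlow : forall c, m0 * Rsum (fun i => Rabs (c i)) n <= nrm (lc c v n).

Lemma approximating_coeffs_cauchy y cs i :
  (forall k, nrm (y +v -v lc (cs k) v n) < / INR (S k)) -> (i < n)%nat -> Cauchy_crit (fun k => cs k i).
Proof.
  intros Hcs Hi eps Heps. destruct (inv_succ_small (eps * m0 / 2)) as [N HN].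
  { apply Rmult_lt_0_compat; [apply Rmult_lt_0_compat|]; lra. }
  exists N. intros k l Hk Hl. unfold Rdist.
  assert (H1 : Rabs (cs k i - cs l i) <= Rsum (fun j => Rabs (cs k j - cs l j)) n).
  { apply (Rsum_ge_term (fun j => Rabs (cs k j - cs l j))). intros; apply Rabs_pos. exact Hi. }
  pose proof (Hlow (fun j => cs k j - cs l j)) as H2. rewrite lc_sub in H2.
  pose proof (norm_sub_triangle (lc (cs k) v n) y (lc (cs l) v n)) as H3.
  pose proof (norm_subC (lc (cs k) v n) y) as H4. pose proof (Hcs k). pose proof (Hcs l).
  pose proof (HN k Hk). pose proof (HN l Hl).
  apply Rmult_lt_reg_l with m0; [exact Hm0|].
  apply Rle_lt_trans with (m0 * Rsum (fun j => Rabs (cs k j - cs l j)) n).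
  - apply Rmult_le_compat_l; lra.
  - lra.
Qed.

(* Hence the span is closed: the limits of the coefficients express y. *)
Lemma span_of_approximations y cs :
  (forall k, nrm (y +v -v lc (cs k) v n) < / INR (S k)) -> span v n y.
Proof.
  intro Hcs.
  pose (a := fun i => epsilon (inhabits 0) (fun l => Un_cv (fun k => cs k i) l)).
  assert (Ha : forall i, (i < n)%nat -> Un_cv (fun k => cs k i) (a i)).
  { intros i Hi. unfold a. apply (epsilon_spec (inhabits 0) (fun l => Un_cv (fun k => cs k i) l)).
    destruct (R_complete _ (approximating_coeffs_cauchy y cs i Hcs Hi)) as [l Hl]. exists l. exact Hl. }
  exists a. apply norm_sub0. apply Rle_antisym; [|apply norm_ge0]. apply le_epsilon. intros eps Heps.
  set (M := Rsum (fun i => nrm (v i)) n + 1).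
  assert (HM : 0 < M).
  { unfold M. assert (0 <= Rsum (fun i => nrm (v i)) n) by (apply Rsum_nonneg; intros; apply norm_ge0). lra. }
  destruct (eventually_forall_lt (fun i k => Rabs (cs k i - a i) < eps / (2 * M)) n) as [K0 HK0].
  { intros i Hi. destruct (Ha i Hi (eps / (2 * M))) as [N HN]. { apply Rdiv_lt_0_compat; lra. }
    exists N. intros k Hk. apply HN. exact Hk. }
  destruct (inv_succ_small (eps / 2)) as [K1 HK1]. lra.
  set (K := (K0 + K1)%nat).
  pose proof (norm_sub_triangle y (lc (cs K) v n) (lc a v n)) as T1. rewrite <- lc_sub in T1.
  pose proof (Hcs K) as T2. pose proof (HK1 K ltac:(unfold K; lia)) as T3.
  pose proof (norm_lc (fun i => cs K i - a i) v n) as T4.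
  assert (T5 : Rsum (fun i => Rabs (cs K i - a i) * nrm (v i)) n <= Rsum (fun i => eps / (2 * M) * nrm (v i)) n).
  { apply Rsum_le. intros i Hi. apply Rmult_le_compat_r. apply norm_ge0.
    left. apply HK0; [exact Hi | unfold K; lia]. }
  rewrite Rsum_scal in T5.
  assert (T6 : eps / (2 * M) * Rsum (fun i => nrm (v i)) n <= eps / 2).
  { apply Rle_trans with (eps / (2 * M) * M).
    - apply Rmult_le_compat_l. left; apply Rdiv_lt_0_compat; lra. unfold M; lra.
    - right. field. lra. }
  lra.
Qed.

Lemma dist_to_span_pos h : ~ span v n h -> exists d, 0 < d /\ forall c, d <= nrm (h +v -v lc c v n).
Proof.
  intro Hh. apply NNPP. intro Hneg. apply Hh.
  assert (Hall : forall k : nat, exists c, nrm (h +v -v lc c v n) < / INR (S k)).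
  { intro k. apply NNPP. intro Hk. apply Hneg. exists (/ INR (S k)). split.
    { apply Rinv_0_lt_compat, lt_0_INR. lia. }
    intro c. apply Rnot_lt_le. intro Hlt. apply Hk. exists c. exact Hlt. }
  apply (span_of_approximations h
           (fun k => epsilon (inhabits (fun _ : nat => 0)) (fun c => nrm (h +v -v lc c v n) < / INR (S k)))).
  intro k. apply (epsilon_spec (inhabits (fun _ : nat => 0)) (fun c => nrm (h +v -v lc c v n) < / INR (S k))).
  apply Hall.
Qed.
End LowerBound.

(* Induction on n, the inductive step combining the lower
   bound for v_0..v_{n-1} with the distance d from v_n to their span. *)
Lemma indep_lower_bound v n : indep v n ->
  exists m, 0 < m /\ forall c, m * Rsum (fun i => Rabs (c i)) n <= nrm (lc c v n).
Proof.
  induction n as [|n IH]; intro Hind.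
  { exists 1. split. lra. intro c. simpl. pose proof (norm_ge0 (lc c v 0)). simpl in *. lra. }
  destruct (IH (indep_prefix v n Hind)) as [m0 [Hm0 Hm0b]].
  destruct (dist_to_span_pos v n m0 Hm0 Hm0b (v n) (indep_last_not_in_span v n Hind)) as [d [Hd HDb]].
  set (nv := nrm (v n)). assert (Hnv : 0 <= nv) by apply norm_ge0.
  assert (Hpos : 0 < (1 + nv / d) / m0 + 1 / d).
  { assert (0 <= nv / d) by (apply Rmult_le_pos; [lra| left; apply Rinv_0_lt_compat; lra]).
    assert (0 < (1 + nv/d) / m0) by (apply Rdiv_lt_0_compat; lra).
    assert (0 < 1 / d) by (apply Rdiv_lt_0_compat; lra). lra. }
  exists (/ ((1 + nv / d) / m0 + 1 / d)). split. apply Rinv_0_lt_compat; exact Hpos.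
  intro c. set (t := lc c v (S n)). simpl Rsum.
  assert (Hcn : Rabs (c n) * d <= nrm t).
  { destruct (Req_dec (c n) 0) as [E|Hne].
    - rewrite E, Rabs_R0. pose proof (norm_ge0 t). lra.
    - assert (Et : t = c n *v (v n +v -v lc (fun i => (- / c n) * c i) v n)).
      { unfold t. simpl. rewrite lc_scal, bs_scal_distr_l, scal_opp, bs_scal_assoc.
        replace (c n * - / c n) with (-1) by (field; exact Hne).
        rewrite <- opp_scal, oppK, addC. reflexivity. }
      rewrite Et, bs_norm_scal. apply Rmult_le_compat_l. apply Rabs_pos. apply HDb. }
  assert (Hhead : m0 * Rsum (fun i => Rabs (c i)) n <= nrm t + Rabs (c n) * nv).
  { eapply Rle_trans; [apply Hm0b|].
    pose proof (norm_le_sub (lc c v n) (-v (c n *v v n))) as H.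
    rewrite oppK, norm_opp, bs_norm_scal in H. exact H. }
  assert (Hcn' : Rabs (c n) <= nrm t / d).
  { apply (Rmult_le_reg_r d); [lra|]. unfold Rdiv. rewrite Rmult_assoc, Rinv_l, Rmult_1_r by lra. exact Hcn. }
  assert (Hsum : Rsum (fun i => Rabs (c i)) n <= nrm t * (1 + nv / d) / m0).
  { apply (Rmult_le_reg_l m0); [lra|].
    replace (m0 * (nrm t * (1 + nv / d) / m0)) with (nrm t + nrm t / d * nv) by (field; split; lra).
    assert (Rabs (c n) * nv <= nrm t / d * nv) by (apply Rmult_le_compat_r; lra). lra. }
  apply (Rmult_le_reg_l ((1 + nv / d) / m0 + 1 / d)); [exact Hpos|].
  rewrite <- Rmult_assoc, Rinv_r, Rmult_1_l by lra.
  replace (((1 + nv / d) / m0 + 1 / d) * nrm t) with (nrm t * (1 + nv / d) / m0 + nrm t / d) by (field; split; lra).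
  lra.
Qed.

Definition functional_linear (f : Y -> R) :=
  (forall x y, f (x +v y) = f x + f y) /\ (forall a x, f (a *v x) = a * f x).
Definition functional_bounded (f : Y -> R) := exists C, 0 < C /\ forall x, Rabs (f x) <= C * nrm x.

Lemma functional_zero f : functional_linear f -> f 0v = 0.
Proof. intros [_ H]. rewrite <- (scal0l 0v) at 1. rewrite H. ring. Qed.
Lemma functional_lc_vanish f c v n : functional_linear f ->
  (forall i, (i < n)%nat -> f (v i) = 0) -> f (lc c v n) = 0.
Proof.
  intros Hf H. induction n; simpl. apply functional_zero; exact Hf.
  rewrite (proj1 Hf), (proj2 Hf), IHn by (intros; apply H; lia). rewrite H by lia. ring.
Qed.

Section ApproximatingOperators.
(* A sequence of bounded finite-rank operators converging pointwise to the
   identity (for an FDD: its partial-sum projections).  It replaces the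
   Hahn-Banach theorem and provides separability. *)
Variable P : nat -> Y -> Y.
Hypothesis HPb : forall N, bounded_operator Y (P N).
Hypothesis HPr : forall N, exists r V, forall y, span V r (P N y).
Hypothesis HPc : forall y, conv (fun N => P N y) y.

(* A finite independent family stays independent under P_N for N large:
   ||w_i - P_N w_i|| < m/2 defeats the lower bound m of the family. *)
Lemma approximation_keeps_indep w k : indep w k -> exists N, indep (fun i => P N (w i)) k.
Proof.
  intro Hw. destruct (indep_lower_bound w k Hw) as [m [Hm Hmb]].
  destruct (eventually_forall_lt (fun i N => nrm (P N (w i) +v -v w i) < m / 2) k) as [N HN].
  { intros i Hi. destruct (HPc (w i) (m / 2)) as [N HN]. lra. exists N. exact HN. }
  exists N. intros c Hc.
  assert (E : lc c w k = lc c (fun i => w i +v -v P N (w i)) k).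
  { rewrite lc_sub_vectors, Hc, opp0, bs_add_zero. reflexivity. }
  assert (Hle : m * Rsum (fun i => Rabs (c i)) k <= m / 2 * Rsum (fun i => Rabs (c i)) k).
  { eapply Rle_trans; [apply Hmb|]. rewrite E. eapply Rle_trans; [apply norm_lc|].
    rewrite <- Rsum_scal. apply Rsum_le. intros i Hi. rewrite (Rmult_comm (m/2)).
    apply Rmult_le_compat_l. apply Rabs_pos. rewrite norm_subC. left. apply HN; [exact Hi|lia]. }
  assert (Hs : Rsum (fun i => Rabs (c i)) k <= 0).
  { assert (0 <= Rsum (fun i => Rabs (c i)) k) by (apply Rsum_nonneg; intros; apply Rabs_pos). nra. }
  intros i Hi. pose proof (Rsum_nonneg_eq0 (fun i => Rabs (c i)) k ltac:(intros; apply Rabs_pos) Hs i Hi).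
  destruct (Req_dec (c i) 0) as [|Hne]; auto. pose proof (Rabs_pos_lt _ Hne). simpl in *. lra.
Qed.

(* For independent w_0..w_k there is a bounded linear functional killing
   w_0..w_{k-1} with value 1 at w_k: the k-th coordinate of P_N y in a basis of
   the range of P_N that starts with P_N w_0, ..., P_N w_k. *)
Lemma coordinate_functional w k : indep w (S k) -> exists f, functional_linear f /\
  functional_bounded f /\ (forall i, (i < k)%nat -> f (w i) = 0) /\ f (w k) = 1.
Proof.
  intro Hw. destruct (approximation_keeps_indep w (S k) Hw) as [N HN].
  destruct (HPr N) as [r [V HV]].
  destruct (extend_independent (fun i => P N (w i)) (S k) V r HN) as [B [s [Hs [HBw [HBi [HBV _]]]]]].
  destruct (indep_lower_bound B s HBi) as [mB [HmB HmBb]].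
  destruct (bounded_pos (P N) (proj2 (HPb N))) as [CP [HCP HCPb]].
  destruct (HPb N) as [[HPa HPs] _].
  pose (coord := fun y => epsilon (inhabits (fun _ : nat => 0)) (fun c => P N y = lc c B s)).
  assert (Hcoord : forall y, P N y = lc (coord y) B s).
  { intro y. apply (epsilon_spec (inhabits (fun _ : nat => 0)) (fun c => P N y = lc c B s)).
    destruct (HV y) as [c ->]. apply span_lc. exact HBV. }
  assert (Hcoord_w : forall i, (i <= k)%nat -> forall j, (j < s)%nat ->
            coord (w i) j = if Nat.eqb j i then 1 else 0).
  { intros i Hi. apply (indep_unique B s _ _ HBi).
    rewrite <- Hcoord, lc_delta by lia. symmetry. apply HBw. lia. }
  exists (fun y => coord y k). split; [split|split; [|split]].
  - intros x y. apply (indep_unique B s (coord (x +v y)) (fun i => coord x i + coord y i)); [exact HBi| |lia].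
    rewrite lc_add, <- !Hcoord. apply HPa.
  - intros a x. apply (indep_unique B s (coord (a *v x)) (fun i => a * coord x i)); [exact HBi| |lia].
    rewrite lc_scal, <- !Hcoord. apply HPs.
  - exists (CP / mB). split. apply Rdiv_lt_0_compat; assumption.
    intro x. apply (Rmult_le_reg_l mB); [exact HmB|].
    replace (mB * (CP / mB * nrm x)) with (CP * nrm x) by (field; lra).
    eapply Rle_trans; [|apply HCPb]. rewrite Hcoord.
    eapply Rle_trans; [|apply HmBb]. apply Rmult_le_compat_l; [lra|].
    apply (Rsum_ge_term (fun i => Rabs (coord x i))). intros; apply Rabs_pos. lia.
  - intros i Hi. rewrite Hcoord_w by lia. destruct (Nat.eqb_spec k i); [lia|reflexivity].
  - rewrite Hcoord_w, Nat.eqb_refl by lia. reflexivity.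
Qed.

Lemma separating_functional w k h : ~ span w k h -> exists f, functional_linear f /\
  functional_bounded f /\ (forall i, (i < k)%nat -> f (w i) = 0) /\ f h = 1.
Proof.
  intro Hh.
  assert (Hi0 : indep w 0) by (intros c _ i Hi; lia).
  destruct (extend_independent w 0 w k Hi0) as [B [s [_ [_ [HBi [HBw HBsub]]]]]].
  assert (HBh : ~ span B s h).
  { intros [c Ec]. apply Hh. rewrite Ec. apply span_lc. intros i Hi.
    destruct (HBsub i Hi ltac:(lia)) as [j [Hj ->]]. apply span_base. exact Hj. }
  destruct (coordinate_functional (set_nth B s h) s (indep_snoc B s h HBi HBh)) as [f [Hf [Hfb [H0 H1]]]].
  exists f. split; [exact Hf|]. split; [exact Hfb|]. split.
  - intros i Hi. destruct (HBw i Hi) as [c ->]. apply functional_lc_vanish; [exact Hf|].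
    intros j Hj. rewrite <- (H0 j Hj). unfold set_nth. destruct (Nat.eqb_spec j s); [lia|reflexivity].
  - unfold set_nth in H1. rewrite Nat.eqb_refl in H1. exact H1.
Qed.

Definition range_basis (N : nat) : nat * (nat -> Y) :=
  epsilon (inhabits (O, fun _ => 0v)) (fun p => forall y, span (snd p) (fst p) (P N y)).
Lemma range_basis_spec N y : span (snd (range_basis N)) (fst (range_basis N)) (P N y).
Proof.
  unfold range_basis.
  apply (epsilon_spec (inhabits (O, fun _ => 0v)) (fun p => forall y, span (snd p) (fst p) (P N y))).
  destruct (HPr N) as [r [V HV]]. exists (r, V). exact HV.
Qed.

(* Y is separable: grid combinations of the spanning families of the ranges
   of the P_N, indexed by n = <N, <M, code>>, are dense. *)
Definition dense_seq (n : nat) : Y :=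
  let (N, rest) := Cantor.of_nat n in let (M, code) := Cantor.of_nat rest in
  lc (fun j => grid_point M (code_nth code j)) (snd (range_basis N)) (fst (range_basis N)).

Lemma dense_seq_dense z eps : 0 < eps -> exists i, nrm (z +v -v dense_seq i) < eps.
Proof.
  intro Heps. destruct (HPc z (eps / 2)) as [N HN]. lra. specialize (HN N (le_n N)).
  unfold Defs.dist in HN. rewrite norm_subC in HN.
  set (r := fst (range_basis N)). set (V := snd (range_basis N)).
  destruct (range_basis_spec N z) as [c Ec]. fold r V in Ec.
  set (Sm := Rsum (fun j => nrm (V j)) r + 1).
  assert (HV0 : 0 <= Rsum (fun j => nrm (V j)) r) by (apply Rsum_nonneg; intros; apply norm_ge0).
  destruct (archimed_cor1 (eps / (2 * Sm))) as [[|M] [HM0 HM0p]]; [apply Rdiv_lt_0_compat; unfold Sm; lra|lia|].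
  set (t := fun j => epsilon (inhabits O) (fun p => Rabs (c j - grid_point M p) <= / INR (S M))).
  assert (Ht : forall j, Rabs (c j - grid_point M (t j)) <= / INR (S M)).
  { intro j. apply (epsilon_spec (inhabits O) (fun p => Rabs (c j - grid_point M p) <= / INR (S M))).
    apply grid_point_approx. }
  destruct (code_exists t r) as [code Hcode].
  exists (Cantor.to_nat (N, Cantor.to_nat (M, code))).
  unfold dense_seq. rewrite !Cantor.cancel_of_to. fold r V.
  pose proof (norm_sub_triangle z (P N z) (lc (fun j => grid_point M (code_nth code j)) V r)) as T1.
  rewrite Ec in T1 at 2. rewrite <- lc_sub in T1.
  pose proof (norm_lc (fun i => c i - grid_point M (code_nth code i)) V r) as T2.
  assert (T3 : Rsum (fun i => Rabs (c i - grid_point M (code_nth code i)) * nrm (V i)) r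
               <= / INR (S M) * Rsum (fun i => nrm (V i)) r).
  { rewrite <- Rsum_scal. apply Rsum_le. intros i Hi. rewrite Hcode by exact Hi.
    apply Rmult_le_compat_r. apply norm_ge0. apply Ht. }
  assert (T4 : / INR (S M) * Rsum (fun i => nrm (V i)) r <= eps / 2).
  { apply Rle_trans with (eps / (2 * Sm) * Sm).
    - apply Rmult_le_compat; try lra. left; apply Rinv_0_lt_compat, lt_0_INR; lia. unfold Sm; lra.
    - right. field. unfold Sm; lra. }
  lra.
Qed.

Variable X : Y -> Prop.
Hypothesis X0 : X 0v.

(* A dense sequence in X: entry <i, m> is a point of X within 1/(m+1) of
   dense_seq i when there is one (and 0 otherwise). *)
Definition dense_seq_in (n : nat) : Y :=
  let (i, m) := Cantor.of_nat n in
  epsilon (inhabits 0v) (fun x => X x /\ (nrm (dense_seq i +v -v x) < / INR (S m) \/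
     ~ exists x', X x' /\ nrm (dense_seq i +v -v x') < / INR (S m))).

Lemma dense_seq_in_spec n : let (i, m) := Cantor.of_nat n in X (dense_seq_in n) /\
  (nrm (dense_seq i +v -v dense_seq_in n) < / INR (S m) \/
   ~ exists x', X x' /\ nrm (dense_seq i +v -v x') < / INR (S m)).
Proof.
  unfold dense_seq_in. destruct (Cantor.of_nat n) as [i m].
  apply (epsilon_spec (inhabits 0v) (fun x => X x /\ (nrm (dense_seq i +v -v x) < / INR (S m) \/
     ~ exists x', X x' /\ nrm (dense_seq i +v -v x') < / INR (S m)))).
  destruct (classic (exists x', X x' /\ nrm (dense_seq i +v -v x') < / INR (S m))) as [[x' [H1 H2]]|Hn].
  - exists x'. auto.
  - exists 0v. auto.
Qed.

Lemma dense_seq_in_mem n : X (dense_seq_in n).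
Proof. pose proof (dense_seq_in_spec n). destruct (Cantor.of_nat n). tauto. Qed.

Lemma dense_seq_in_dense z eps : X z -> 0 < eps -> exists n, Defs.dist z (dense_seq_in n) < eps.
Proof.
  intros Hz Heps. destruct (archimed_cor1 (eps / 2)) as [[|m] [HM0 HM0p]]; [lra|lia|].
  destruct (dense_seq_dense z (/ INR (S m))) as [i Hi]. apply Rinv_0_lt_compat, lt_0_INR; lia.
  exists (Cantor.to_nat (i, m)). pose proof (dense_seq_in_spec (Cantor.to_nat (i, m))) as G.
  rewrite Cantor.cancel_of_to in G. destruct G as [_ [G|G]].
  - unfold Defs.dist. pose proof (norm_sub_triangle z (dense_seq i) (dense_seq_in (Cantor.to_nat (i, m)))). lra.
  - exfalso. apply G. exists z. split; [exact Hz|]. rewrite norm_subC. exact Hi.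
Qed.
End ApproximatingOperators.

Lemma density_from_sequence (X : Y -> Prop) (Q' : nat -> Y -> Y) (g : nat -> Y) :
  (forall n, X (g n)) -> (forall z eps, X z -> 0 < eps -> exists n, Defs.dist z (g n) < eps) ->
  (forall n, exists m, psum Y Q' (g n) m = g n) -> density_condition Y X Q'.
Proof.
  intros HgX Hdense Hfin.
  exists (fun x => X x /\ exists m, psum Y Q' x m = x). split; [|split].
  - intros x [Hx _]. exact Hx.
  - intros x Hx e He. destruct (Hdense x e Hx He) as [n Hn]. exists (g n). auto.
  - intros x [_ [m Hm]]. exists m. symmetry. exact Hm.
Qed.

Section FDD.
Variable Q : nat -> Y -> Y.
Hypothesis hQ : is_FDD Y Q.

Lemma Q_bounded j : bounded_operator Y (Q j).
Proof. apply (proj1 hQ j). Qed.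
Lemma Q_idem j x : Q j (Q j x) = Q j x.
Proof. apply (proj1 hQ j). Qed.
Lemma Q_orth i j x : i <> j -> Q i (Q j x) = 0v.
Proof. intro; apply (proj1 (proj2 hQ)); assumption. Qed.

Definition partial_proj (N : nat) (y : Y) := psum Y Q y N.

Lemma partial_proj_bounded N : bounded_operator Y (partial_proj N).
Proof.
  induction N. apply bounded_zero. apply (bounded_add (partial_proj N) (Q N)); [exact IHN | apply Q_bounded].
Qed.

Lemma partial_proj_conv y : conv (fun N => partial_proj N y) y.
Proof. apply (proj2 (proj2 hQ)). Qed.

Definition concat_family (V : nat -> Y) r (W : nat -> Y) := fun i => if Nat.ltb i r then V i else W (i - r)%nat.

Lemma lc_concat c d V r W t : lc (fun i => if Nat.ltb i r then c i else d (i - r)%nat) (concat_family V r W) (r + t)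
  = lc c V r +v lc d W t.
Proof.
  induction t.
  - rewrite Nat.add_0_r, bs_add_zero. apply lc_ext. intros i Hi. unfold concat_family.
    destruct (Nat.ltb_spec i r); [auto|lia].
  - rewrite Nat.add_succ_r. simpl. rewrite IHt, <- addA. do 2 f_equal.
    unfold concat_family. destruct (Nat.ltb_spec (r + t) r); [lia|]. replace (r + t - r)%nat with t by lia. reflexivity.
Qed.

Lemma partial_proj_finite_rank N : exists r V, forall y, span V r (partial_proj N y).
Proof.
  induction N.
  - exists O, (fun _ => 0v). intro y. apply span_zero.
  - destruct IHN as [r [V HV]]. destruct (proj1 hQ N) as [_ [[t [W HW]] _]].
    exists (r + t)%nat, (concat_family V r W). intro y. destruct (HV y) as [c Ec]. destruct (HW y) as [d Ed].
    exists (fun i => if Nat.ltb i r then c i else d (i - r)%nat). rewrite lc_concat.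
    change (partial_proj N y +v Q N y = lc c V r +v lc d W t). rewrite Ec, Ed. reflexivity.
Qed.

Lemma Q_partial_proj i N y : Q i (partial_proj N y) = if Nat.ltb i N then Q i y else 0v.
Proof.
  induction N.
  { simpl. destruct (Nat.ltb_spec i 0); [lia|]. apply lin_zero, Q_bounded. }
  change (partial_proj (S N) y) with (partial_proj N y +v Q N y). rewrite (proj1 (proj1 (Q_bounded i))), IHN.
  destruct (Nat.eq_dec i N) as [->|Hne].
  - rewrite Q_idem. destruct (Nat.ltb_spec N N); [lia|]. destruct (Nat.ltb_spec N (S N)); [|lia]. apply add0l.
  - rewrite Q_orth, bs_add_zero by exact Hne.
    destruct (Nat.ltb_spec i N), (Nat.ltb_spec i (S N)); try lia; reflexivity.
Qed.

Lemma partial_proj_as_ssum N y : partial_proj N y = ssum (fun k => Q k y) N.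
Proof. induction N; simpl. reflexivity. unfold partial_proj in *. simpl. rewrite IHN. reflexivity. Qed.

Lemma partial_proj_nested m n y : (n <= m)%nat -> partial_proj m (partial_proj n y) = partial_proj n y.
Proof.
  intro H. rewrite !partial_proj_as_ssum.
  rewrite (ssum_ext _ (fun k => if Nat.ltb k n then Q k y else 0v)).
  2: { intros k _. rewrite <- partial_proj_as_ssum. apply Q_partial_proj. }
  rewrite (ssum_zero_tail _ n m); [| intros k Hk; destruct (Nat.ltb_spec k n); [lia|reflexivity] | exact H].
  apply ssum_ext. intros k Hk. destruct (Nat.ltb_spec k n); [reflexivity|lia].
Qed.

(* Vectors with finite expansion: P_n e = e for some n.  Finite expansions are
   stable under linear combinations (P_n is nested in n). *)
Definition finitely_supported (e : Y) := exists n, partial_proj n e = e.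

Lemma finitely_supported_lc c v n : (forall i, (i < n)%nat -> finitely_supported (v i)) ->
  finitely_supported (lc c v n).
Proof.
  assert (Hmono : forall e n m, partial_proj n e = e -> (n <= m)%nat -> partial_proj m e = e).
  { intros e n0 m He Hm. rewrite <- He, partial_proj_nested by exact Hm. reflexivity. }
  induction n; intro H; simpl.
  - exists O. reflexivity.
  - destruct (IHn ltac:(intros; apply H; lia)) as [a Ha]. destruct (H n ltac:(lia)) as [b Hb].
    destruct (partial_proj_bounded (max a b)) as [[Hadd Hscal] _].
    exists (max a b). rewrite Hadd, Hscal, (Hmono _ a), (Hmono _ b); auto; lia.
Qed.

Section Conjugate.
Variables T S : Y -> Y.
Hypothesis HT : bounded_operator Y T.
Hypothesis HS : bounded_operator Y S.
Hypothesis HST : forall x, S (T x) = x.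
Hypothesis HTS : forall x, T (S x) = x.

Lemma psum_conjugate x n : psum Y (fun j y => T (Q j (S y))) x n = T (partial_proj n (S x)).
Proof.
  induction n; simpl.
  - symmetry. apply lin_zero, HT.
  - rewrite IHn. symmetry. apply (proj1 (proj1 HT)).
Qed.

Lemma conjugate_FDD : is_FDD Y (fun j y => T (Q j (S y))).
Proof.
  split; [|split].
  - intro j. split; [|split].
    + apply bounded_comp; [exact HT|]. apply bounded_comp; [apply Q_bounded|exact HS].
    + destruct (proj1 hQ j) as [_ [[n [v Hv]] _]].
      exists n, (fun i => T (v i)). intro x. destruct (Hv (S x)) as [c Ec]. exists c.
      rewrite Ec. apply lc_lin, HT.
    + intro x. rewrite HST, Q_idem. reflexivity.
  - intros i j Hij x. rewrite HST, Q_orth by exact Hij. apply lin_zero, HT.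
  - intro y. eapply conv_ext; [intro n; symmetry; apply psum_conjugate|].
    assert (H : conv (fun n => T (partial_proj n (S y))) (T (S y))).
    { apply conv_op; [exact HT|]. apply partial_proj_conv. }
    rewrite HTS in H. exact H.
Qed.
End Conjugate.
End FDD.

Section Perturbation.
Variable Q : nat -> Y -> Y.
Hypothesis hQ : is_FDD Y Q.
Variable X : Y -> Prop.
Variable eps : R.
Hypothesis Heps : 0 < eps.

Local Notation P := (partial_proj Q).
Local Notation g := (dense_seq_in P X).

Definition is_new k := ~ span g k (g k).

Definition functional_spec k (p : (Y -> R) * R) :=
  functional_linear (fst p) /\ 0 < snd p /\ (forall x, Rabs (fst p x) <= snd p * nrm x) /\
  (forall i, (i < k)%nat -> fst p (g i) = 0) /\ (is_new k -> fst p (g k) = 1).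
Definition functional_pair k := epsilon (inhabits ((fun _ : Y => 0), 1)) (functional_spec k).

Lemma functional_pair_spec k : functional_spec k (functional_pair k).
Proof.
  apply (epsilon_spec (inhabits ((fun _ : Y => 0), 1)) (functional_spec k)).
  destruct (classic (is_new k)) as [Hd|Hd].
  - destruct (separating_functional P (partial_proj_bounded Q hQ) (partial_proj_finite_rank Q hQ)
                (partial_proj_conv Q hQ) g k (g k) Hd) as [f [Hf [[C [HC HCb]] [H0 H1]]]].
    exists (f, C). repeat split; auto; apply Hf.
  - exists ((fun _ : Y => 0), 1). repeat split; simpl; intros; try ring; try lra; try tauto.
    rewrite Rabs_R0. pose proof (norm_ge0 x). lra.
Qed.

Definition phi k := fst (functional_pair k).
Definition phi_bound k := snd (functional_pair k).
Lemma phi_linear k : functional_linear (phi k). Proof. apply (functional_pair_spec k). Qed.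
Lemma phi_bound_pos k : 0 < phi_bound k. Proof. apply (functional_pair_spec k). Qed.
Lemma phi_bounded k x : Rabs (phi k x) <= phi_bound k * nrm x. Proof. apply (functional_pair_spec k). Qed.
Lemma phi_vanish k i : (i < k)%nat -> phi k (g i) = 0. Proof. apply (functional_pair_spec k). Qed.
Lemma phi_new k : is_new k -> phi k (g k) = 1. Proof. apply (functional_pair_spec k). Qed.

(* the size allowed for u_k, so that  sum_k ||phi_k|| ||u_k|| <= eps *)
Definition size_bound k := eps * (/ 2) ^ (S k) / phi_bound k.
Lemma size_bound_pos k : 0 < size_bound k.
Proof.
  unfold size_bound. apply Rdiv_lt_0_compat; [|apply phi_bound_pos].
  apply Rmult_lt_0_compat; [lra|apply pow_lt; lra].
Qed.

Definition cutoff k r := epsilon (inhabits O) (fun m => nrm (r +v -v P m r) <= size_bound k).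
Lemma cutoff_spec k r : nrm (r +v -v P (cutoff k r) r) <= size_bound k.
Proof.
  apply (epsilon_spec (inhabits O) (fun m => nrm (r +v -v P m r) <= size_bound k)).
  destruct (partial_proj_conv Q hQ r (size_bound k) (size_bound_pos k)) as [N HN].
  exists N. specialize (HN N (le_n N)). unfold Defs.dist in HN. rewrite norm_subC. lra.
Qed.

(* The vectors u_k, by recursion:  r_k = g_k - sum_{j<k} phi_j(g_k) u_j  and
   u_k = r_k - P_{m_k} r_k  with  m_k = cutoff k r_k.  U k lists u_0..u_{k-1}. *)
Definition next_u k (prev : nat -> Y) :=
  let r := g k +v -v lc (fun j => phi j (g k)) prev k in r +v -v P (cutoff k r) r.
Fixpoint U (k : nat) : nat -> Y :=
  match k with O => fun _ => 0v | S k' => set_nth (U k') k' (next_u k' (U k')) end.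
Definition u k := U (S k) k.

Lemma U_u k j : (j < k)%nat -> U k j = u j.
Proof.
  induction k; intro H. lia. simpl. unfold set_nth. destruct (Nat.eqb_spec j k) as [->|Hne].
  - unfold u. simpl. unfold set_nth. rewrite Nat.eqb_refl. reflexivity.
  - apply IHk. lia.
Qed.

Definition residual k := g k +v -v lc (fun j => phi j (g k)) u k.
Lemma u_eq k : u k = residual k +v -v P (cutoff k (residual k)) (residual k).
Proof.
  unfold u at 1. simpl. unfold set_nth. rewrite Nat.eqb_refl. unfold next_u, residual.
  rewrite (lc_ext _ _ (U k) u) by (intros i Hi; split; [reflexivity|apply U_u; exact Hi]).
  reflexivity.
Qed.
Lemma u_small k : nrm (u k) <= size_bound k.
Proof. rewrite u_eq. apply cutoff_spec. Qed.

Definition rank_one k x := phi k x *v u k.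
Lemma rank_one_linear k : is_linear Y (rank_one k).
Proof.
  unfold rank_one. split.
  - intros x y. rewrite (proj1 (phi_linear k)), bs_scal_distr_r. reflexivity.
  - intros c x. rewrite (proj2 (phi_linear k)), bs_scal_assoc. reflexivity.
Qed.
Lemma rank_one_small k x : nrm (rank_one k x) <= eps / 2 * nrm x * (/ 2) ^ k.
Proof.
  unfold rank_one. rewrite bs_norm_scal. pose proof (phi_bounded k x). pose proof (u_small k).
  pose proof (phi_bound_pos k). pose proof (norm_ge0 x). pose proof (norm_ge0 (u k)).
  pose proof (Rabs_pos (phi k x)).
  apply Rle_trans with (phi_bound k * nrm x * size_bound k).
  - apply Rmult_le_compat; assumption.
  - unfold size_bound. right. simpl. field. lra.
Qed.

(* On a new g_k the series R g_k = sum_j phi_j(g_k) u_j stops at j = k and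
   telescopes:  R g_k = g_k - P_{m_k} r_k. *)
Lemma series_at_new k : is_new k -> forall n, (S k <= n)%nat ->
  ssum (fun j => rank_one j (g k)) n = g k +v -v P (cutoff k (residual k)) (residual k).
Proof.
  intros Hk n Hn. rewrite (ssum_zero_tail _ (S k) n); [|intros j Hj; unfold rank_one; rewrite phi_vanish by lia; apply scal0l|exact Hn].
  simpl. unfold rank_one at 2. rewrite phi_new, bs_scal_one by exact Hk.
  unfold rank_one. rewrite lc_as_ssum, u_eq. apply addKsub.
Qed.

(* The perturbation: ||R|| <= eps and (I - R) g_k has a finite expansion for
   every k (by strong induction: old g_k are combinations of earlier ones). *)
Lemma small_perturbation : exists R, bounded_operator Y R /\
  (forall x, nrm (R x) <= eps * nrm x) /\ (forall k, finitely_supported Q (g k +v -v R (g k))).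
Proof.
  destruct (operator_series rank_one (eps / 2) (/ 2) rank_one_linear ltac:(lra) rank_one_small)
    as [R [HR [HRconv HRtail]]].
  exists R. split; [exact HR|]. split.
  { intro x. specialize (HRtail x O). simpl in HRtail. rewrite opp0, bs_add_zero in HRtail.
    eapply Rle_trans; [exact HRtail|]. right. field. }
  set (Sop := fun x => x +v -v R x).
  assert (HS : is_linear Y Sop).
  { destruct HR as [[HR1 HR2] _]. split; intros; unfold Sop.
    - rewrite HR1, opp_add. apply addACA.
    - rewrite HR2. apply scal_sub. }
  intro k. change (finitely_supported Q (Sop (g k))).
  induction k as [k IH] using (well_founded_induction Wf_nat.lt_wf).
  destruct (classic (is_new k)) as [Hnew|Hold].
  - exists (cutoff k (residual k)).
    assert (HRg : R (g k) = g k +v -v P (cutoff k (residual k)) (residual k)).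
    { apply (conv_unique (ssum (fun j => rank_one j (g k)))); [apply HRconv|].
      apply (conv_eventually_ext (fun _ => g k +v -v P (cutoff k (residual k)) (residual k))); [|apply conv_const].
      exists (S k). intros n Hn. symmetry. apply series_at_new; assumption. }
    unfold Sop. rewrite HRg, subKsub. apply partial_proj_nested; [exact hQ|lia].
  - apply NNPP in Hold. destruct Hold as [c ->]. rewrite (lc_lin Sop) by exact HS.
    apply (finitely_supported_lc Q hQ). intros i Hi. apply IH. exact Hi.
Qed.
End Perturbation.

End Banach.

Theorem lemma3p1 (Y : BanachSpace) (Q : nat -> Y -> Y) (X : Y -> Prop)
  (hQ : is_FDD Y Q) (hX : closed_subspace Y X) (delta : R) (hdelta : 0 < delta) :
  exists (T Tinv : Y -> Y),
    bounded_operator Y T /\ is_inverse_op Y T Tinv /\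
    opnorm_T_minus_I_lt Y T delta /\
    is_FDD Y (fun j y => T (Q j (Tinv y))) /\
    density_condition Y X (fun j y => T (Q j (Tinv y))).
Proof.
  (* perturbation size e with  e / (1 - e) <= 2 e < delta *)
  set (e := Rmin (/ 2) (delta / 4)).
  assert (He : 0 < e <= / 2) by (split; [apply Rmin_pos; lra | apply Rmin_l]).
  assert (He4 : e <= delta / 4) by apply Rmin_r.
  assert (Hbound : e / (1 - e) < delta).
  { apply Rle_lt_trans with (2 * e); [|lra].
    apply (Rmult_le_reg_r (1 - e)); [lra|]. unfold Rdiv. rewrite Rmult_assoc, Rinv_l, Rmult_1_r by lra. nra. }
  destruct (small_perturbation Y Q hQ X e (proj1 He)) as [A [HA [HAe Hfin]]].
  assert (He1 : 0 <= e < 1) by lra.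
  destruct (neumann_series Y A e HA He1 HAe) as [T [HT [HTS [HST HTI]]]].
  set (S := fun x => bs_add x (bs_opp (A x))).
  assert (HS : bounded_operator Y S) by (apply bounded_id_minus; exact HA).
  exists T, S. split; [exact HT|]. split; [|split; [|split]].
  - split; [exact HS|]. split; [exact HST | exact HTS].
  - exists (e / (1 - e)). split; [exact Hbound | exact HTI].
  - apply conjugate_FDD; assumption.
  - apply density_from_sequence with (g := dense_seq_in Y (partial_proj Y Q) X).
    + apply dense_seq_in_mem, (proj1 hX).
    + apply dense_seq_in_dense; [apply partial_proj_finite_rank, hQ | apply partial_proj_conv, hQ | apply (proj1 hX)].
    + intro n. destruct (Hfin n) as [m Hm]. exists m.
      rewrite (psum_conjugate Y Q T S HT). unfold S. rewrite Hm. apply HTS.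
Qed.
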